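(* Suppose there exists a subspace $\mathcal C\subseteq V$ of dimension $K$ with orthogonal projector $P$ that detects every error in $\mathcal E_\xi$ for each $\xi$ in a prescribed set $\mathcal S$ of sector labels. Then there exist real numbers $\{A_\xi\}_\xi,\{B_\xi\}_\xi$ (indexed by all sectors) satisfying $A_\xi\ge0$ for all $\xi$; $A_\xi\le K B_\xi$ for all $\xi$; $\sum_\xi A_\xi=K$; $\sum_\xi B_\xi=K^2$; $B_\xi=\sum_\rho M_{\xi\rho}A_\rho$ for all $\xi$; and $A_\xi=KB_\xi$ for all $\xi\in\mathcal S$. Namely one may take $A_\xi=A_\xi(P,P)$, $B_\xi=B_\xi(P,P)$. In particular, if this linear system has no solution, no $K$-dimensional subspace of $V$ detects all errors in the sectors $\mathcal E_\xi$, $\xi\in\mathcal S$.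
   Context: Let $G$ be a group and $V$ a finite-dimensional complex Hilbert space carrying a unitary representation $\rho$ of $G$; $G$ acts on $\mathcal L(V)$ by conjugation $g\cdot X=\rho(g)X\rho(g)^\dagger$, unitary for the Hilbert–Schmidt inner product $\langle X_1,X_2\rangle=\mathrm{Tr}(X_1^\dagger X_2)$. Assume multiplicity-freeness: $\mathcal L(V)=\bigoplus_\xi\mathcal E_\xi$, a finite orthogonal direct sum of nonzero, pairwise non-isomorphic irreducible $G$-subrepresentations; $d_\xi=\dim\mathcal E_\xi$. Let $\Pi_\xi$ be the orthogonal projector onto $\mathcal E_\xi$, $\mathcal B_\xi$ an orthonormal basis of $\mathcal E_\xi$, $\mathrm{Twirl}_\xi(X)=\sum_{E\in\mathcal B_\xi}E^\dagger XE$, $A_\xi(X_1,X_2)=\langle X_1,\Pi_\xi(X_2)\rangle$, $B_\xi(X_1,X_2)=\langle X_1,\mathrm{Twirl}_\xi(X_2)\rangle$. With $\langle\!\langle\mathcal S,\mathcal T\rangle\!\rangle=\mathrm{Tr}(\mathcal S^\dagger\mathcal T)$ on superoperators, the unnormalized MacWilliams matrix is $M_{\xi\rho}=\frac{1}{d_\rho}\langle\!\langle\Pi_\rho,\mathrm{Twirl}_\xi\rangle\!\rangle$ (equivalently $\sqrt{d_\xi/d_\rho}\,U_{\xi\rho}$ with $U_{\xi\rho}=\langle\!\langle d_\rho^{-1/2}\Pi_\rho,d_\xi^{-1/2}\mathrm{Twirl}_\xi\rangle\!\rangle$). A subspace $\mathcal C\subseteq V$ with orthogonal projector $P$ detects every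 error in $\mathcal F\subseteq\mathcal L(V)$ if for every $E\in\mathcal F$ there is $c_E\in\mathbb C$ with $PEP=c_EP$. *)

From HB Require Import structures.
From mathcomp Require Import all_boot all_order all_algebra.
From mathcomp Require Import reals.
From mathcomp Require Import complex.

Set Implicit Arguments.
Unset Strict Implicit.
Unset Printing Implicit Defensive.

Import Order.TTheory GRing.Theory Num.Theory.
Local Open Scope ring_scope.

(* Matrix / Hilbert-Schmidt conventions on L(V) = 'M[C]_n, V = C^n.          *)
Section HS.
Variables (C : numClosedFieldType) (n : nat).

Definition adjM (X : 'M[C]_n) : 'M[C]_n := (map_mx Num.conj X)^T.

Definition hs (X Y : 'M[C]_n) : C := \tr (adjM X *m Y).

Definition conj_act (U X : 'M[C]_n) : 'M[C]_n := U *m X *m adjM U.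

Definition G_invariant (G : Type) (rho : G -> 'M[C]_n) (W : {vspace 'M[C]_n}) :=
  forall (g : G) (X : 'M[C]_n), X \in W -> conj_act (rho g) X \in W.

Definition G_irreducible (G : Type) (rho : G -> 'M[C]_n) (W : {vspace 'M[C]_n}) :=
  [/\ W != 0%VS, G_invariant rho W &
      forall U : {vspace 'M[C]_n}, (U <= W)%VS -> G_invariant rho U ->
        U = 0%VS \/ U = W].

Definition G_isomorphic (G : Type) (rho : G -> 'M[C]_n)
    (W1 W2 : {vspace 'M[C]_n}) :=
  exists f : 'M[C]_n -> 'M[C]_n,
    [/\ forall (a : C) (X Y : 'M[C]_n), f (a *: X + Y) = a *: f X + f Y,
        forall X, X \in W1 -> f X \in W2,
        {in W1 &, injective f},
        forall Y, Y \in W2 -> exists2 X, X \in W1 & f X = Y &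
        forall (g : G) X, X \in W1 -> f (conj_act (rho g) X) = conj_act (rho g) (f X)].

Definition orthonormal_basis (W : {vspace 'M[C]_n}) (b : seq 'M[C]_n) :=
  basis_of W b /\
  forall i j, (i < size b)%N -> (j < size b)%N ->
    hs b`_i b`_j = (i == j)%:R.

(* orthogonal projector onto span b, for b an orthonormal family *)
Definition Proj (b : seq 'M[C]_n) (X : 'M[C]_n) : 'M[C]_n :=
  \sum_(E <- b) hs E X *: E.

Definition Twirl (b : seq 'M[C]_n) (X : 'M[C]_n) : 'M[C]_n :=
  \sum_(E <- b) adjM E *m X *m E.

Definition Aform (b : seq 'M[C]_n) (X1 X2 : 'M[C]_n) : C := hs X1 (Proj b X2).
Definition Bform (b : seq 'M[C]_n) (X1 X2 : 'M[C]_n) : C := hs X1 (Twirl b X2).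

(* <<S, T>> = Tr(S^dagger T) on superoperators, computed in the orthonormal
   basis of matrix units of L(V) *)
Definition superdot (S T : 'M[C]_n -> 'M[C]_n) : C :=
  \sum_(i < n) \sum_(j < n) hs (S (delta_mx i j)) (T (delta_mx i j)).

Definition MacW (I : Type) (E : I -> {vspace 'M[C]_n}) (bs : I -> seq 'M[C]_n)
    (xi r : I) : C :=
  (\dim (E r))%:R^-1 * superdot (Proj (bs r)) (Twirl (bs xi)).

End HS.

(* A_xi(P,P) = |Pi_xi P|^2 >= 0, and these sum to |P|^2 = tr P = K.  Summed
   over all sectors the twirls give X |-> tr(X) 1, so the B_xi sum to
   (tr P)^2 = K^2.  Moreover B_xi = sum_{E in B_xi} |P E P|^2 while
   A_xi = sum_E |<P, E>|^2 = sum_E |<P, P E P>|^2, so A_xi <= K B_xi by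
   Cauchy-Schwarz, with equality when every P E P is a multiple of P.
   Finally Twirl_xi commutes with the G-action, hence by Schur's lemma and
   multiplicity-freeness it acts on each sector E_rho as a scalar, namely
   M_{xi rho}; projecting Twirl_xi(P) onto the sectors gives B = M A. *)

From HB Require Import structures.
From mathcomp Require Import all_boot all_order all_algebra.
From mathcomp Require Import reals complex.
From mathcomp Require Import ring.
Import Order.TTheory GRing.Theory Num.Theory.
Local Open Scope ring_scope.

Set Implicit Arguments.
Unset Strict Implicit.
Unset Printing Implicit Defensive.

Section HilbertSchmidt.
Variables (C : numClosedFieldType) (n : nat).
Local Notation M := ('M[C]_n).
Implicit Types (X Y Z A B U : M) (b : seq M).

Lemma adjME A i j : adjM A i j = (A j i)^*.
Proof. by rewrite !mxE. Qed.

Lemma adjMK : involutive (@adjM C n).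
Proof. by move=> A; apply/matrixP => i j; rewrite !adjME conjCK. Qed.

Lemma adjM_mul A B : adjM (A *m B) = adjM B *m adjM A.
Proof. by rewrite /adjM map_mxM trmx_mul. Qed.

Lemma adjMD A B : adjM (A + B) = adjM A + adjM B.
Proof. by apply/matrixP => i j; rewrite !mxE rmorphD. Qed.

Lemma adjMZ a A : adjM (a *: A) = a^* *: adjM A.
Proof. by apply/matrixP => i j; rewrite !mxE rmorphM. Qed.

Lemma adjM_sum I (r : seq I) (P : pred I) (F : I -> M) :
  adjM (\sum_(i <- r | P i) F i) = \sum_(i <- r | P i) adjM (F i).
Proof.
apply: (big_morph _ adjMD).
by apply/matrixP => i j; rewrite !mxE conjC0.
Qed.

Lemma mxtrace_adjM A : \tr (adjM A) = (\tr A)^*.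
Proof. by rewrite /adjM mxtrace_tr trace_map_mx. Qed.

Lemma delta_mx_sandwich_entry A B i j : (A *m delta_mx i j *m B) i j = A i i * B j j.
Proof.
rewrite mxE (bigD1 j) //= big1 ?addr0 => [|k /negbTE kj]; last first.
  by rewrite mxE big1 ?mul0r // => l _; rewrite mxE kj andbF mulr0.
rewrite mxE (bigD1 i) //= big1 ?addr0 => [|l /negbTE li]; last by rewrite mxE li mulr0.
by rewrite mxE !eqxx mulr1.
Qed.

Lemma hsE X Y : hs X Y = \sum_i \sum_j (X j i)^* * Y j i.
Proof.
rewrite /hs /mxtrace; apply: eq_bigr => i _; rewrite mxE.
by apply: eq_bigr => j _; rewrite adjME.
Qed.

Lemma hsC X Y : hs Y X = (hs X Y)^*.
Proof.
rewrite !hsE rmorph_sum; apply: eq_bigr => i _; rewrite rmorph_sum.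
by apply: eq_bigr => j _; rewrite rmorphM /= conjCK mulrC.
Qed.

Lemma hs_is_linear X : linear_for *%R (hs X).
Proof. by move=> a Y Z; rewrite /hs mulmxDr -scalemxAr linearD linearZ. Qed.

HB.instance Definition _ X :=
  GRing.isLinear.Build C M C *%R (hs X) (hs_is_linear X).

Lemma hs_sumr I (r : seq I) (P : pred I) (F : I -> M) X :
  hs X (\sum_(i <- r | P i) F i) = \sum_(i <- r | P i) hs X (F i).
Proof. exact: raddf_sum. Qed.

Lemma hsBr X Y Z : hs X (Y - Z) = hs X Y - hs X Z.
Proof. exact: raddfB. Qed.

Lemma hsZr a X Y : hs X (a *: Y) = a * hs X Y.
Proof. exact: linearZ. Qed.

Lemma hs0r X : hs X 0 = 0.
Proof. exact: raddf0. Qed.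

Lemma hs_suml I (r : seq I) (P : pred I) (F : I -> M) X :
  hs (\sum_(i <- r | P i) F i) X = \sum_(i <- r | P i) hs (F i) X.
Proof.
rewrite hsC hs_sumr rmorph_sum.
by apply: eq_bigr => i _; rewrite [RHS]hsC.
Qed.

Lemma hsBl X Y Z : hs (Y - Z) X = hs Y X - hs Z X.
Proof. by rewrite !(hsC X) hsBr rmorphB. Qed.

Lemma hsZl a X Y : hs (a *: Y) X = a^* * hs Y X.
Proof. by rewrite !(hsC X) hsZr rmorphM. Qed.

Lemma hs0l X : hs 0 X = 0.
Proof. by rewrite hsC hs0r conjC0. Qed.

Lemma hs_ge0 X : 0 <= hs X X.
Proof.
rewrite hsE; apply: sumr_ge0 => i _; apply: sumr_ge0 => j _.
by rewrite mulrC mul_conjC_ge0.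
Qed.

Lemma hs_eq0 X : (hs X X == 0) = (X == 0).
Proof.
apply/idP/eqP => [|->]; last by rewrite hs0r.
have entry_ge0 j i : 0 <= (X j i)^* * X j i by rewrite mulrC mul_conjC_ge0.
have col_ge0 i : 0 <= \sum_j (X j i)^* * X j i by apply: sumr_ge0.
rewrite hsE => /eqP/(psumr_eq0P (fun i _ => col_ge0 i)) X0.
apply/matrixP => j i; apply/eqP; rewrite mxE -mul_conjC_eq0 mulrC; apply/eqP.
exact: (psumr_eq0P (fun j _ => entry_ge0 j i) (X0 i isT)).
Qed.

Lemma hs_mull A X Y : hs (A *m X) Y = hs X (adjM A *m Y).
Proof. by rewrite /hs adjM_mul mulmxA. Qed.

Lemma hs_mulr A X Y : hs (X *m A) Y = hs X (Y *m adjM A).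
Proof. by rewrite /hs adjM_mul -mulmxA mxtrace_mulC mulmxA. Qed.

Lemma hs_CauchySchwarz X Y : hs X Y * (hs X Y)^* <= hs X X * hs Y Y.
Proof.
set a := hs X X; set s := hs X Y.
have a_real : a^* = a by rewrite /a -hsC.
(* expand the norm of [a Y - <X,Y> X] *)
have := hs_ge0 (a *: Y - s *: X).
rewrite !(hsBl, hsZl, hsBr, hsZr) a_real -/a -/s (hsC X Y) -/s.
have [a0 _|a_neq0] := eqVneq a 0.
  move/eqP: a0; rewrite /a hs_eq0 => /eqP X0.
  by rewrite /s /a X0 !hs0l !mul0r.
have a_gt0 : 0 < a by rewrite lt_def a_neq0 hs_ge0.
by rewrite [s * a]mulrC subrr mulr0 subr0 pmulr_rge0 // subr_ge0.
Qed.

Lemma hs_delta i j X : hs (delta_mx i j) X = X i j.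
Proof.
rewrite hsE (bigD1 j) //= (bigD1 i) //= !mxE !eqxx /= conjC1 mul1r.
rewrite big1 ?addr0 => [|k /negbTE nk]; last by rewrite mxE nk conjC0 mul0r.
rewrite big1 ?addr0 // => k /negbTE nk; apply: big1 => l _.
by rewrite mxE nk andbF conjC0 mul0r.
Qed.

Lemma hs_parseval_delta X Y :
  hs X Y = \sum_i \sum_j hs X (delta_mx i j) * hs (delta_mx i j) Y.
Proof.
rewrite {1}(matrix_sum_delta Y) hs_sumr; apply: eq_bigr => i _.
by rewrite hs_sumr; apply: eq_bigr => j _; rewrite hsZr hs_delta mulrC.
Qed.

Lemma conj_act_is_linear U : linear (conj_act U).
Proof. by move=> a X Y; rewrite /conj_act mulmxDr mulmxDl -scalemxAr -scalemxAl. Qed.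

HB.instance Definition _ U :=
  GRing.isLinear.Build C M M _ (conj_act U) (conj_act_is_linear U).

Lemma adjM_conj_act U X : adjM (conj_act U X) = conj_act U (adjM X).
Proof. by rewrite /conj_act !adjM_mul adjMK mulmxA. Qed.

Lemma conj_actK U : adjM U *m U = 1%:M -> cancel (conj_act U) (conj_act (adjM U)).
Proof.
move=> unitU X; rewrite /conj_act adjMK !mulmxA unitU mul1mx.
by rewrite -mulmxA unitU mulmx1.
Qed.

Lemma hs_conj_act_adj U X Y : hs (conj_act (adjM U) X) Y = hs X (conj_act U Y).
Proof. by rewrite /conj_act hs_mulr hs_mull !adjMK mulmxA. Qed.

Lemma Proj_is_linear b : linear (Proj b).
Proof.
move=> a X Y; rewrite /Proj scaler_sumr -big_split /=; apply: eq_bigr => F _.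
by rewrite linearP /= scalerDl scalerA.
Qed.

HB.instance Definition _ b :=
  GRing.isLinear.Build C M M _ (Proj b) (Proj_is_linear b).

Lemma Twirl_is_linear b : linear (Twirl b).
Proof.
move=> a X Y; rewrite /Twirl scaler_sumr -big_split /=; apply: eq_bigr => F _.
by rewrite mulmxDr mulmxDl -scalemxAr -scalemxAl.
Qed.

HB.instance Definition _ b :=
  GRing.isLinear.Build C M M _ (Twirl b) (Twirl_is_linear b).

End HilbertSchmidt.

Section OrthonormalBasis.
Variables (C : numClosedFieldType) (n : nat).
Local Notation M := ('M[C]_n).
Variables (W : {vspace M}) (b : seq M).
Hypothesis b_onb : orthonormal_basis W b.

Lemma onb_mem F : F \in b -> F \in W.
Proof. by case: b_onb => /andP[/eqP <- _] _ Fb; rewrite memv_span. Qed.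

Lemma onb_size : \dim W = size b.
Proof. by case: b_onb => basis_b _; rewrite (size_basis (X := in_tuple b)). Qed.

Lemma Proj_nth X : Proj b X = \sum_(i < size b) hs b`_i X *: b`_i.
Proof. by rewrite /Proj (big_nth 0) big_mkord. Qed.

Lemma Proj_mem X : Proj b X \in W.
Proof.
by rewrite /Proj big_seq; apply: memv_suml => F Fb; rewrite memvZ // onb_mem.
Qed.

Lemma hs_onb_coord (c : 'I_(size b) -> C) (i : 'I_(size b)) :
  hs b`_i (\sum_(j < size b) c j *: b`_j) = c i.
Proof.
rewrite hs_sumr (bigD1 i) //= hsZr b_onb.2 // eqxx mulr1 big1 ?addr0 // => j ji.
by rewrite hsZr b_onb.2 // val_eqE eq_sym (negbTE ji) mulr0.
Qed.

Lemma Proj_id Y : Y \in W -> Proj b Y = Y.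
Proof.
case: b_onb => /andP[/eqP <- _] _ /(coord_span (X := in_tuple b)) Y_coord.
rewrite Proj_nth [in RHS]Y_coord; apply: eq_bigr => i _.
by rewrite [in hs _ Y]Y_coord hs_onb_coord.
Qed.

Lemma Proj_eq0 Y : (forall F, F \in W -> hs F Y = 0) -> Proj b Y = 0.
Proof.
by move=> Y_orth; rewrite /Proj big_seq big1 // => F Fb; rewrite Y_orth ?scale0r ?onb_mem.
Qed.

Lemma onb_eigenvector (f : {linear M -> M}) : (0 < size b)%N ->
    (forall X, X \in W -> f X \in W) ->
  exists a X, [/\ X \in W, X != 0 & f X = a *: X].
Proof.
move=> b_gt0 fW; set d := size b.
pose Mf : 'M[C]_d := \matrix_(i, j) hs b`_j (f b`_i).
have [a /eigenvalueP[v vMf v_neq0]] := eigenvalue_closed Mf b_gt0.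
pose X := \sum_(i < d) v 0 i *: b`_i.
have bW (i : 'I_d) : b`_i \in W by rewrite onb_mem ?mem_nth.
have f_b (i : 'I_d) : f b`_i = \sum_(j < d) Mf i j *: b`_j.
  rewrite -(Proj_id (fW _ (bW i))) Proj_nth.
  by apply: eq_bigr => j _; rewrite mxE.
exists a, X; split.
- by apply: memv_suml => i _; rewrite memvZ.
- apply: contraNneq v_neq0 => X0; apply/eqP/rowP => j.
  by rewrite !mxE -(hs_onb_coord (v 0)) -/X X0 hs0r.
rewrite linear_sum /= scaler_sumr; under eq_bigr => i _ do
  rewrite linearZ /= f_b scaler_sumr.
rewrite exchange_big /=; apply: eq_bigr => j _.
have /rowP/(_ j) := vMf; rewrite !mxE scalerA => <-.
by rewrite scaler_suml; apply: eq_bigr => i _; rewrite scalerA.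
Qed.

End OrthonormalBasis.

Lemma hs_Proj (C : numClosedFieldType) n (b : seq 'M[C]_n) X Y :
  hs X (Proj b Y) = hs (Proj b X) Y.
Proof.
rewrite /Proj hs_sumr hs_suml; apply: eq_bigr => F _.
by rewrite hsZr hsZl -hsC mulrC.
Qed.

Section Twirl.
Variables (C : numClosedFieldType) (n : nat).
Local Notation M := ('M[C]_n).
Implicit Types (X Y U : M).

Lemma adjM_sum_mul I J (rI : seq I) (rJ : seq J) (c : I -> C) (d : J -> C)
    (A : I -> M) (B : J -> M) X :
  adjM (\sum_(i <- rI) c i *: A i) *m X *m (\sum_(j <- rJ) d j *: B j) =
  \sum_(i <- rI) \sum_(j <- rJ) ((c i)^* * d j) *: (adjM (A i) *m X *m B j).
Proof.
rewrite adjM_sum !mulmx_suml; apply: eq_bigr => i _.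
rewrite mulmx_sumr; apply: eq_bigr => j _.
by rewrite adjMZ -!scalemxAl -scalemxAr scalerA.
Qed.

Lemma Twirl_frame (W : {vspace M}) b b' :
  orthonormal_basis W b -> {subset b' <= W} ->
  {in W, forall Y, Proj b' Y = Y} -> Twirl b' =1 Twirl b.
Proof.
move=> b_onb b'W b'_parseval X.
have coef (i j : 'I_(size b)) :
    \sum_(F <- b') (hs b`_i F)^* * hs b`_j F = (j == i :> nat)%:R.
  have bi_W : b`_i \in W by rewrite (onb_mem b_onb) ?mem_nth.
  rewrite -(b_onb.2 j i) // -{2}(b'_parseval _ bi_W) hs_sumr.
  by apply: eq_bigr => F _; rewrite hsZr (hsC b`_i F).
have -> : Twirl b' X = \sum_(i < size b) \sum_(j < size b)
    (\sum_(F <- b') (hs b`_i F)^* * hs b`_j F) *: (adjM b`_i *m X *m b`_j).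
  rewrite /Twirl big_seq; under eq_bigr => F F_b' do
    rewrite -{1 2}(Proj_id b_onb (b'W F F_b')) Proj_nth adjM_sum_mul.
  rewrite -big_seq exchange_big; apply: eq_bigr => i _.
  rewrite exchange_big; apply: eq_bigr => j _.
  by rewrite scaler_suml.
rewrite /Twirl (big_nth 0) big_mkord; apply: eq_bigr => i _.
rewrite (bigD1 i) //= coef eqxx scale1r big1 ?addr0 // => j ji.
by rewrite coef val_eqE (negbTE ji) scale0r.
Qed.

Lemma Twirl_conj_act (W : {vspace M}) b U X :
  orthonormal_basis W b -> adjM U *m U = 1%:M ->
  (forall Y, Y \in W -> conj_act U Y \in W) ->
  (forall Y, Y \in W -> conj_act (adjM U) Y \in W) ->
  Twirl b (conj_act U X) = conj_act U (Twirl b X).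
Proof.
move=> b_onb unitU W_U W_adjU; have unitU' := mulmx1C unitU.
pose b' := map (conj_act (adjM U)) b.
have b'W : {subset b' <= W}.
  by move=> _ /mapP[F Fb ->]; rewrite W_adjU ?(onb_mem b_onb).
have b'_parseval : {in W, forall Y, Proj b' Y = Y}.
  move=> Y YW; rewrite /Proj big_map.
  under eq_bigr => F _ do rewrite hs_conj_act_adj -linearZ.
  by rewrite -linear_sum -/(Proj b _) (Proj_id b_onb (W_U _ YW)); apply: conj_actK.
rewrite -[in RHS](Twirl_frame b_onb b'W b'_parseval) /Twirl big_map linear_sum.
apply: eq_bigr => F _; rewrite adjM_conj_act /= /conj_act adjMK.
by rewrite !mulmxA unitU' mul1mx -!mulmxA unitU' mulmx1.
Qed.

End Twirl.

Section Projector.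
Variables (C : numClosedFieldType) (n : nat).
Local Notation M := ('M[C]_n).
Variables (P : M) (K : nat).
Hypotheses (P_herm : adjM P = P) (P_idem : P *m P = P) (P_rank : \rank P = K).

(* Writing P = A B with A row-full and B row-free, idempotence forces
   B A = 1, so tr P = tr (B A) = rank P. *)
Lemma mxtrace_projector : \tr P = K%:R.
Proof.
have BA1 : row_base P *m col_base P = 1%:M.
  apply: (row_full_inj (col_base_full P)); apply: (row_free_inj (row_base_free P)).
  by rewrite mulmx1 mulmxA !mulmx_base -mulmxA mulmx_base P_idem.
by rewrite -P_rank -mxtrace1 -BA1 -mxtrace_mulC mulmx_base.
Qed.

Lemma hs_projector : hs P P = K%:R.
Proof. by rewrite /hs P_herm P_idem mxtrace_projector. Qed.

Lemma hs_projector_compress F : hs P F = hs P (P *m F *m P).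
Proof. by rewrite /hs P_herm !mulmxA P_idem [RHS]mxtrace_mulC mulmxA P_idem. Qed.

Lemma Bform_projector b :
  Bform b P P = \sum_(F <- b) hs (P *m F *m P) (P *m F *m P).
Proof.
rewrite /Bform /Twirl hs_sumr; apply: eq_bigr => F _.
have PPX X : P *m (P *m X) = P *m X by rewrite mulmxA P_idem.
rewrite /hs !adjM_mul P_herm -!mulmxA mxtrace_mulC -!mulmxA PPX.
by rewrite [RHS]mxtrace_mulC -!mulmxA P_idem.
Qed.

Lemma Bform_projector_ge0 b : 0 <= Bform b P P.
Proof. by rewrite Bform_projector; apply: sumr_ge0 => F _; apply: hs_ge0. Qed.

Lemma Aform_projector b : Aform b P P = \sum_(F <- b) hs P F * (hs P F)^*.
Proof.
rewrite /Aform /Proj hs_sumr; apply: eq_bigr => F _.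
by rewrite hsZr (hsC P F) mulrC.
Qed.

(* Cauchy-Schwarz for <P, P F P>, term by term. *)
Lemma Aform_le_projector b : Aform b P P <= K%:R * Bform b P P.
Proof.
rewrite Aform_projector Bform_projector mulr_sumr; apply: ler_sum => F _.
by rewrite -hs_projector hs_projector_compress hs_CauchySchwarz.
Qed.

Lemma Aform_projector_detect b :
  (forall F, F \in b -> exists c, P *m F *m P = c *: P) ->
  Aform b P P = K%:R * Bform b P P.
Proof.
move=> detect; rewrite Aform_projector Bform_projector mulr_sumr.
apply: eq_big_seq => F /detect[c PFP].
rewrite hs_projector_compress PFP hsZr hsZl hsZr hs_projector rmorphM /=.
by rewrite conjC_nat; ring.
Qed.

End Projector.

Section Sectors.
Variables (C : numClosedFieldType) (n : nat).
Local Notation M := ('M[C]_n).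
Variables (I : finType) (E : I -> {vspace M}) (bs : I -> seq M).
Hypothesis E_span : (\sum_(xi : I) E xi)%VS = fullv.
Hypothesis E_orth : forall xi r : I, xi != r -> forall X Y : M,
  X \in E xi -> Y \in E r -> hs X Y = 0.
Hypothesis bs_onb : forall xi : I, orthonormal_basis (E xi) (bs xi).

Local Notation Pi r := (Proj (bs r)).

Lemma Proj_sector_eq0 r s Y : r != s -> Y \in E s -> Pi r Y = 0.
Proof. by move=> rs Ys; apply: (Proj_eq0 (bs_onb r)) => F Fr; apply: (E_orth rs). Qed.

Lemma Proj_sector_id r X : Pi r (Pi r X) = Pi r X.
Proof. exact/(Proj_id (bs_onb r))/(Proj_mem (bs_onb r)). Qed.

Lemma sum_Proj_sectors X : \sum_r Pi r X = X.
Proof.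
have /memv_sumP[Xs Xs_E ->] : X \in (\sum_r E r)%VS by rewrite E_span memvf.
apply: eq_bigr => r _; rewrite linear_sum (bigD1 r) //= (Proj_id (bs_onb r)) ?Xs_E //.
by rewrite big1 ?addr0 // => s sr; rewrite (@Proj_sector_eq0 r s) 1?eq_sym ?Xs_E.
Qed.

(* Both sides are the trace of [L]. *)
Lemma trace_sectors (L : {linear M -> M}) :
  \sum_i \sum_j hs (delta_mx i j) (L (delta_mx i j)) =
  \sum_r \sum_(F <- bs r) hs F (L F).
Proof.
under [RHS]eq_bigr => r _ do under eq_bigr => F _ do rewrite hs_parseval_delta.
under [RHS]eq_bigr => r _ do rewrite exchange_big /=.
rewrite [RHS]exchange_big /=; apply: eq_bigr => i _.
under [RHS]eq_bigr => r _ do rewrite exchange_big /=.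
rewrite [RHS]exchange_big /=; apply: eq_bigr => j _.
rewrite -{2}(sum_Proj_sectors (delta_mx i j)) !linear_sum.
apply: eq_bigr => r _; rewrite /Proj !linear_sum; apply: eq_bigr => F _.
by rewrite !linearZ.
Qed.

Lemma Aform_diag r X : Aform (bs r) X X = hs (Pi r X) (Pi r X).
Proof. by rewrite /Aform -{1}Proj_sector_id hs_Proj. Qed.

Lemma sum_Aform X Y : \sum_r Aform (bs r) X Y = hs X Y.
Proof. by rewrite /Aform -hs_sumr sum_Proj_sectors. Qed.

(* Summed over all sectors, the twirls form the full twirl [Y |-> tr Y 1]. *)
Lemma sum_Bform X Y : \sum_r Bform (bs r) X Y = (\tr X)^* * \tr Y.
Proof.
have -> : \sum_r Bform (bs r) X Y =
    \sum_r \sum_(F <- bs r) hs F ((mulmxr (adjM X) \o mulmx Y) F).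
  apply: eq_bigr => r _; rewrite /Bform /Twirl hs_sumr; apply: eq_bigr => F _.
  by rewrite /hs /= mxtrace_mulC !mulmxA.
rewrite -trace_sectors -mxtrace_adjM mulrC /mxtrace mulr_suml.
apply: eq_bigr => i _; rewrite mulr_sumr; apply: eq_bigr => j _.
by rewrite hs_delta /= delta_mx_sandwich_entry.
Qed.

Section Schur.
Variables (G : groupType) (rho : G -> M).
Hypothesis rho_mul : forall g h : G, rho (g * h)%g = rho g *m rho h.
Hypothesis rho_one : rho 1%g = 1%:M.
Hypothesis rho_unitary : forall g : G, adjM (rho g) *m rho g = 1%:M.
Hypothesis E_irr : forall xi, G_irreducible rho (E xi).
Hypothesis E_noniso : forall xi r, xi != r -> ~ G_isomorphic rho (E xi) (E r).

Definition equivariant (f : M -> M) :=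
  forall g X, f (conj_act (rho g) X) = conj_act (rho g) (f X).

Lemma adjM_rho g : adjM (rho g) = rho g^-1%g.
Proof.
rewrite -[RHS]mulmx1 -(mulmx1C (rho_unitary g)) mulmxA -rho_mul.
by rewrite mulVg rho_one mul1mx.
Qed.

Lemma sector_neq0 r : E r != 0%VS.
Proof. by case: (E_irr r). Qed.

Lemma sector_conj_act r g X : X \in E r -> conj_act (rho g) X \in E r.
Proof. by case: (E_irr r) => _ E_inv _; apply: E_inv. Qed.

Lemma equivariant_Proj r : equivariant (Pi r).
Proof.
move=> g X; rewrite -{1}(sum_Proj_sectors X).
rewrite (linear_sum (conj_act _)) (linear_sum (Proj _)) (bigD1 r) //=.
rewrite (Proj_id (bs_onb r)) ?sector_conj_act ?(Proj_mem (bs_onb r)) //.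
rewrite big1 ?addr0 // => s sr.
by rewrite (@Proj_sector_eq0 r s) 1?eq_sym // sector_conj_act // (Proj_mem (bs_onb s)).
Qed.

Lemma equivariant_Twirl xi : equivariant (Twirl (bs xi)).
Proof.
move=> g X; apply: (Twirl_conj_act _ (bs_onb xi)) => // Y.
  exact: sector_conj_act.
by rewrite adjM_rho; apply: sector_conj_act.
Qed.

Lemma equivariant_ker (f : {linear M -> M}) r : equivariant f ->
  (forall X, X \in E r -> f X = 0) \/ (forall X, X \in E r -> f X = 0 -> X = 0).
Proof.
move=> f_eq; have [_ _ E_min] := E_irr r.
pose K := (E r :&: lker (linfun f))%VS.
have memK X : (X \in K) = (X \in E r) && (f X == 0).
  by rewrite memv_cap memv_ker lfunE.
have K_inv : G_invariant rho K.
  move=> g Y; rewrite !memK => /andP[Yr /eqP fY0].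
  by rewrite sector_conj_act // (f_eq g Y) fY0 raddf0 eqxx.
case: (E_min _ (capvSl _ _) K_inv) => [K0|KE]; [right => X Xr fX0|left => X Xr].
  by apply/eqP; rewrite -memv0 -K0 memK Xr fX0 eqxx.
by move: Xr; rewrite -KE memK => /andP[_ /eqP].
Qed.

(* Schur's lemma for non-isomorphic irreducibles. *)
Lemma equivariant_cross (f : {linear M -> M}) r s X :
  equivariant f -> r != s -> X \in E r -> Pi s (f X) = 0.
Proof.
move=> f_eq rs Xr; pose h : {linear M -> M} := Pi s \o f.
have h_eq : equivariant h by move=> g Y; rewrite /h /= (f_eq g Y) (equivariant_Proj s g).
case: (equivariant_ker r h_eq) => [h0|h_inj0]; first exact: h0.
have h_inj : {in E r &, injective h}.
  move=> Y Z Yr Zr hYZ; apply/eqP; rewrite -subr_eq0; apply/eqP/h_inj0.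
    by rewrite memvB.
  by move: hYZ; rewrite /h /= !linearB /= => ->; rewrite subrr.
pose U := (linfun h @: E r)%VS.
have memU Y : Y \in U -> exists2 Z, Z \in E r & Y = h Z.
  by case/memv_imgP => Z Zr ->; exists Z; rewrite ?lfunE.
have U_s : (U <= E s)%VS.
  by apply/subvP => _ /memU[Z _ ->]; apply: (Proj_mem (bs_onb s)).
have U_inv : G_invariant rho U.
  by move=> g _ /memU[Z Zr ->]; rewrite -(h_eq g Z) -(lfunE h) memv_img ?sector_conj_act.
have [_ _ Es_min] := E_irr s.
have [U0|U_full] := Es_min _ U_s U_inv.
  case/negP: (sector_neq0 r); rewrite -vpick0; apply/eqP/h_inj0; first exact: memv_pick.
  by apply/eqP; rewrite -memv0 -U0 -(lfunE h) memv_img ?memv_pick.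
case: (E_noniso rs); exists h; split => //.
- by move=> a Y Z; rewrite linearP.
- by move=> Y Yr; rewrite -U_full -(lfunE h) memv_img.
- by move=> Y; rewrite -U_full => /memU[Z Zr ->]; exists Z.
Qed.

Lemma equivariant_sector_stable (f : {linear M -> M}) r X :
  equivariant f -> X \in E r -> f X \in E r.
Proof.
move=> f_eq Xr; rewrite -(sum_Proj_sectors (f X)) (bigD1 r) //=.
rewrite big1 ?addr0 ?(Proj_mem (bs_onb r)) // => s sr.
by apply: (equivariant_cross f_eq _ Xr); rewrite eq_sym.
Qed.

Lemma equivariant_scalar (f : {linear M -> M}) r :
  equivariant f -> exists a, forall X, X \in E r -> f X = a *: X.
Proof.
move=> f_eq; have b_gt0 : (0 < size (bs r))%N.
  by rewrite lt0n -(onb_size (bs_onb r)) dimv_eq0 sector_neq0.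
have [a [X0 [X0r X0_neq0 fX0]]] :=
  onb_eigenvector (bs_onb r) b_gt0 (fun X => equivariant_sector_stable f_eq).
pose h : {linear M -> M} := f \- a \*: idfun.
have h_eq : equivariant h.
  by move=> g Y; rewrite /h /= (f_eq g Y) -linearZ -linearB.
exists a; case: (equivariant_ker r h_eq) => [h0 X Xr|h_inj0].
  by apply/eqP; rewrite -subr_eq0; apply/eqP/h0.
by case/negP: X0_neq0; apply/eqP/h_inj0; rewrite //= fX0 subrr.
Qed.

Lemma Proj_equivariant_scalar (f : {linear M -> M}) r a X :
  equivariant f -> (forall Y, Y \in E r -> f Y = a *: Y) ->
  Pi r (f X) = a *: Pi r X.
Proof.
move=> f_eq f_r; rewrite -{1}(sum_Proj_sectors X) (linear_sum f) (linear_sum (Proj _)).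
rewrite (bigD1 r) //=.
rewrite f_r ?(Proj_mem (bs_onb r)) // linearZ /= Proj_sector_id big1 ?addr0 //.
move=> s sr; apply: (equivariant_cross f_eq sr).
exact: (Proj_mem (bs_onb s)).
Qed.

Lemma superdot_Proj_scalar (f : {linear M -> M}) r a :
  equivariant f -> (forall Y, Y \in E r -> f Y = a *: Y) ->
  superdot (Pi r) f = a * (\dim (E r))%:R.
Proof.
move=> f_eq f_r.
have -> : superdot (Pi r) f = \sum_r' \sum_(F <- bs r') hs F ((Pi r \o f) F).
  rewrite -trace_sectors /superdot; apply: eq_bigr => i _; apply: eq_bigr => j _.
  by rewrite hs_Proj.
rewrite (bigD1 r) //= [X in _ + X]big1 ?addr0; last first.
  move=> s sr; rewrite big_seq big1 // => F Fs.
  rewrite (@Proj_sector_eq0 r s) ?hs0r 1?eq_sym //.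
  exact/(equivariant_sector_stable f_eq)/(onb_mem (bs_onb s)).
rewrite (onb_size (bs_onb r)) mulr_natr -[in RHS](card_ord (size (bs r))).
rewrite -sumr_const (big_nth 0) big_mkord; apply: eq_bigr => i _.
have bi_r : (bs r)`_i \in E r by rewrite (onb_mem (bs_onb r)) ?mem_nth.
rewrite f_r // linearZ /= (Proj_id (bs_onb r) bi_r).
by rewrite hsZr (bs_onb r).2 // eqxx mulr1.
Qed.

Lemma Bform_MacW xi X Y :
  Bform (bs xi) X Y = \sum_r MacW E bs xi r * Aform (bs r) X Y.
Proof.
rewrite /Bform -(sum_Proj_sectors (Twirl (bs xi) Y)) hs_sumr; apply: eq_bigr => r _.
have T_eq := equivariant_Twirl xi; have [a T_r] := equivariant_scalar r T_eq.
rewrite (Proj_equivariant_scalar _ T_eq T_r) hsZr /MacW (superdot_Proj_scalar T_eq T_r).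
by rewrite mulrCA mulVf ?mulr1 // pnatr_eq0 dimv_eq0 sector_neq0.
Qed.

End Schur.
End Sectors.

Theorem mainTheorem7
  (R : realType) (G : groupType) (n : nat) (rho : G -> 'M[R[i]]_n)
  (rho_mul : forall g h : G, rho (g * h)%g = rho g *m rho h)
  (rho_one : rho 1%g = 1%:M)
  (rho_unitary : forall g : G, adjM (rho g) *m rho g = 1%:M)
  (I : finType) (E : I -> {vspace 'M[R[i]]_n})
  (E_span : (\sum_(xi : I) E xi)%VS = fullv)
  (E_orth : forall xi r : I, xi != r -> forall X Y : 'M[R[i]]_n,
      X \in E xi -> Y \in E r -> hs X Y = 0)
  (E_irr : forall xi : I, G_irreducible rho (E xi))
  (E_noniso : forall xi r : I, xi != r -> ~ G_isomorphic rho (E xi) (E r))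
  (bs : I -> seq 'M[R[i]]_n)
  (bs_onb : forall xi : I, orthonormal_basis (E xi) (bs xi))
  (K : nat) (P : 'M[R[i]]_n)
  (P_herm : adjM P = P) (P_idem : P *m P = P) (P_rank : \rank P = K)
  (S : {set I})
  (P_detects : forall xi : I, xi \in S -> forall X : 'M[R[i]]_n, X \in E xi ->
      exists c : R[i], P *m X *m P = c *: P) :
  exists A B : I -> R,
    (forall xi, real_complex R (A xi) = Aform (bs xi) P P) /\
    (forall xi, real_complex R (B xi) = Bform (bs xi) P P) /\
    (forall xi, 0 <= A xi) /\
    (forall xi, A xi <= K%:R * B xi) /\
    (\sum_(xi : I) A xi = K%:R) /\
    (\sum_(xi : I) B xi = (K ^ 2)%:R) /\
    (forall xi, real_complex R (B xi) =
                \sum_(r : I) MacW E bs xi r * real_complex R (A r)) /\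
    (forall xi, xi \in S -> A xi = K%:R * B xi).
Proof.
have A_ge0 xi : 0 <= Aform (bs xi) P P.
  by rewrite (Aform_diag bs_onb) hs_ge0.
have ReA xi := RRe_real (ger0_real (A_ge0 xi)).
have ReB xi := RRe_real (ger0_real (Bform_projector_ge0 P_herm P_idem (bs xi))).
exists (fun xi => complex.Re (Aform (bs xi) P P)),
       (fun xi => complex.Re (Bform (bs xi) P P)).
split=> //; split=> //; do !split.
- by move=> xi; rewrite -lecR ReA rmorph0.
- by move=> xi; rewrite -lecR rmorphM /= rmorph_nat ReA ReB Aform_le_projector.
- apply: complexI; rewrite rmorph_sum /= rmorph_nat; under eq_bigr do rewrite ReA.
  by rewrite (sum_Aform E_span E_orth bs_onb) (hs_projector P_herm P_idem P_rank).
- apply: complexI; rewrite rmorph_sum /= rmorph_nat; under eq_bigr do rewrite ReB.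
  rewrite (sum_Bform E_span E_orth bs_onb) (mxtrace_projector P_idem P_rank).
  by rewrite conjC_nat natrX.
- move=> xi; rewrite ReB; under eq_bigr do rewrite ReA.
  exact: (Bform_MacW E_span E_orth bs_onb rho_mul rho_one rho_unitary E_irr E_noniso).
move=> xi Sxi; apply: complexI; rewrite rmorphM /= rmorph_nat ReA ReB.
apply: Aform_projector_detect => // F /(onb_mem (bs_onb xi)).
exact: P_detects.
Qed.
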